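(* Let $k,r\geq 0$ be integers. Every $r$-shallow topological minor of a $k$-gap-cover-planar graph is $(2r+1)k$-gap-cover-planar.
   Context: All graphs are simple, finite and undirected. A drawing of a graph $G$ in the plane represents each vertex by a distinct point and each edge $vw$ by a non-self-intersecting curve between the points of $v$ and $w$, such that no three edges cross at a single point. Two distinct edges are independent if they share no endpoint. For a drawing $D$ of $G$, let $D^\times$ be the set of unordered pairs $\{e,f\}$ of independent edges that cross in $D$. A bearing of $D$ is a set $B$ of ordered pairs $(e,f)$ with $\{e,f\}\in D^\times$ such that for each $\{e,f\}\in D^\times$ at least one of $(e,f),(f,e)$ lies in $B$. For a bearing $B$, a $B$-cover of an edge $e$ is a set $C\subseteq V(G)$ such that every edge $f$ with $(e,f)\in B$ has an endpoint in $C$. A drawing $D$ is $k$-gap-cover-planar if there is a bearing $B$ of $D$ such that each edge $vw\in E(G)$ has a $B$-cover contained in $V(G)\setminus\{v,w\}$ of size at most $k$. A graph is $k$-gap-cover-planar if it has a $k$-gap-cover-planar drawing in the plane. A $(\leq c)$-subdivision of $H$ replaces each edge of $H$ by a path with at most $c$ new internal vertices; $H$ is an $r$-shallow topological minor of $G$ if some $(\leq 2r)$-subdivision of $H$ is a subgraph of $G$. *)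

From Stdlib Require Import Reals.
From Coquelicot Require Import Coquelicot.
From mathcomp Require Import all_boot.

Set Implicit Arguments.
Unset Strict Implicit.
Unset Printing Implicit Defensive.

Record sgraph := SGraph {
  gV : finType;
  gadj : rel gV;
  gsym : symmetric gadj;
  girr : irreflexive gadj }.

Definition is_edge (G : sgraph) (A : {set gV G}) : bool :=
  [exists u, exists v, gadj u v && (A == [set u; v])].

Definition point := (R * R)%type.

Definition in01 (t : R) : Prop := Rle R0 t /\ Rle t R1.
Definition in01o (t : R) : Prop := Rlt R0 t /\ Rlt t R1.

(* Raw drawing data: a point for each vertex, a parametrized curve for each
   (edge) vertex set.  The curve of an edge is its restriction to [0,1]. *)
Record drawing (G : sgraph) := Drawing {
  dpos : gV G -> point;
  dcurve : {set gV G} -> R -> point }.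

Definition is_drawing (G : sgraph) (D : drawing G) : Prop :=
  injective (dpos D) /\
  (forall A : {set gV G}, is_edge A ->
     (* continuous curve (any continuous path on [0,1] extends to R) *)
     (forall t, continuous (dcurve D A) t) /\
     (forall s t, in01 s -> in01 t -> dcurve D A s = dcurve D A t -> s = t) /\
     (exists u v, A = [set u; v] /\ dcurve D A R0 = dpos D u /\
                  dcurve D A R1 = dpos D v) /\
     (* standard convention: an edge meets no vertex other than its ends *)
     (forall t x, in01 t -> dcurve D A t = dpos D x -> x \in A)) /\
  (forall (A1 A2 A3 : {set gV G}) (p : point),
     is_edge A1 -> is_edge A2 -> is_edge A3 ->
     A1 <> A2 -> A1 <> A3 -> A2 <> A3 ->
     (exists t, in01o t /\ dcurve D A1 t = p) ->
     (exists t, in01o t /\ dcurve D A2 t = p) ->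
     (exists t, in01o t /\ dcurve D A3 t = p) -> False).

Definition crossing (G : sgraph) (D : drawing G) (e f : {set gV G}) : Prop :=
  is_edge e /\ is_edge f /\ [disjoint e & f] /\
  exists s t, in01 s /\ in01 t /\ dcurve D e s = dcurve D f t.

Definition bearing (G : sgraph) (D : drawing G)
    (B : {set gV G} -> {set gV G} -> Prop) : Prop :=
  (forall e f, B e f -> crossing D e f) /\
  (forall e f, crossing D e f -> B e f \/ B f e).

Definition gap_cover_drawing (k : nat) (G : sgraph) (D : drawing G) : Prop :=
  exists B, bearing D B /\
    forall e : {set gV G}, is_edge e ->
      exists C : {set gV G}, (#|C| <= k)%N /\ [disjoint C & e] /\
        forall f, B e f -> exists x, x \in f /\ x \in C.

Definition gap_cover_planar (k : nat) (G : sgraph) : Prop :=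
  exists D : drawing G, is_drawing D /\ gap_cover_drawing k D.

(* H is an r-shallow topological minor of G: some (<= 2r)-subdivision of H
   is a subgraph of G, i.e. the vertices of H map injectively (phi) to
   branch vertices of G and each edge uv of H maps to a path of G from
   phi u to phi v whose at most 2r internal vertices (P A) are new
   (not branch vertices) and not shared with the path of another edge. *)
Definition shallow_top_minor (r : nat) (H G : sgraph) : Prop :=
  exists (phi : gV H -> gV G) (P : {set gV H} -> seq (gV G)),
    injective phi /\
    (forall A : {set gV H}, is_edge A ->
       exists u v, A = [set u; v] /\
         path (@gadj G) (phi u) (rcons (P A) (phi v)) /\
         uniq (P A) /\ (size (P A) <= 2 * r)%N /\
         (forall x, x \in P A -> forall y, x != phi y)) /\
    (forall A A' : {set gV H}, is_edge A -> is_edge A' -> A <> A' ->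
       forall x, x \in P A -> x \notin P A').

(* Draw each edge uv of H along its subdivision path in the drawing of G:
   adding the edges of the path one at a time from its far end, and following
   each new edge curve only up to its first point on the arc built so far,
   gives a simple arc from phi u to phi v inside the union of these curves.
   Distinct paths share no edge of G and paths of independent edges of H share
   no vertex, so every crossing of two such arcs lies on a crossing of G
   between edges of the two paths, and no three arcs pass through a common
   point.  A crossing of H is oriented as such an underlying crossing of G,
   and the gap cover of an edge of H is the union of the gap covers of the at
   most 2r + 1 edges of its path, pulled back to H by sending every vertex of
   G to an end of the edge of H whose path contains it. *)

From Stdlib Require Import Reals Lra Classical IndefiniteDescription.
From Coquelicot Require Import Coquelicot.
From mathcomp Require Import all_boot.

Set Implicit Arguments.
Unset Strict Implicit.
Unset Printing Implicit Defensive.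

Local Open Scope R_scope.

(** * Simple arcs in the plane *)

Record simple_arc (I : point -> Prop) (c : R -> point) (a b : point) : Prop := Arc {
  arc_cont : forall t, continuous c t;
  arc_inj : forall s t, in01 s -> in01 t -> c s = c t -> s = t;
  arc_start : c 0 = a;
  arc_end : c 1 = b;
  arc_sub : forall t, in01 t -> I (c t) }.

Lemma continuous_fst_comp (c : R -> point) t :
  continuous c t -> continuous (fun t => fst (c t)) t.
Proof. by move=> ct; apply: continuous_comp => //; case: (c t); apply: continuous_fst. Qed.

Lemma continuous_snd_comp (c : R -> point) t :
  continuous c t -> continuous (fun t => snd (c t)) t.
Proof. by move=> ct; apply: continuous_comp => //; case: (c t); apply: continuous_snd. Qed.

Lemma continuous_affine (p q t : R) : continuous (fun t => p + q * t) t.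
Proof.
apply: (continuous_plus (fun _ => p) (fun t => q * t)); first exact: continuous_const.
exact: (continuous_mult (fun _ => q) (fun t => t) t (continuous_const _ _) (continuous_id _)).
Qed.

Lemma continuous_comp_affine (c : R -> point) (f : R -> R) p q t :
  (forall t, continuous c t) -> (forall u, f u = p + q * u) ->
  continuous (fun t => c (f t)) t.
Proof.
move=> cc f_affine; apply: continuous_comp; last exact: cc.
apply: (continuous_ext (fun u => p + q * u)); first by move=> u; rewrite f_affine.
exact: continuous_affine.
Qed.

Lemma arc_weaken (I J : point -> Prop) c a b :
  (forall p, I p -> J p) -> simple_arc I c a b -> simple_arc J c a b.
Proof. by move=> IJ [cc ci c0 c1 cI]; split => // t /cI /IJ. Qed.

Lemma arc_rev I c a b : simple_arc I c a b -> simple_arc I (fun t => c (1 - t)) b a.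
Proof.
move=> [cc ci c0 c1 cI]; split.
- by move=> t; apply: (continuous_comp_affine (p := 1) (q := -1)) => // u; ring.
- move=> s t [? ?] [? ?] /ci; rewrite /in01 => st; have := st ltac:(lra) ltac:(lra); lra.
- by rewrite Rminus_0_r.
- by rewrite Rminus_diag.
- by move=> t [? ?]; apply: cI; rewrite /in01; lra.
Qed.

Lemma arc_restrict I c a b x y : 0 <= x < y -> y <= 1 ->
  simple_arc I c a b -> simple_arc I (fun t => c (x + (y - x) * t)) (c x) (c y).
Proof.
move=> [x0 xy] y1 [cc ci _ _ cI].
have in_xy t : in01 t -> in01 (x + (y - x) * t).
  by move=> [? ?]; split; nra.
split.
- by move=> t; apply: continuous_comp_affine.
- move=> s t hs ht /ci st; have := st (in_xy s hs) (in_xy t ht); nra.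
- by f_equal; ring.
- by f_equal; ring.
- by move=> t /in_xy /cI.
Qed.

Lemma arc_join I J f g a b c : simple_arc I f a b -> simple_arc J g b c ->
  (forall s t, in01 s -> in01 t -> f s = g t -> s = 1 /\ t = 0) ->
  simple_arc (fun p => I p \/ J p)
      (extension_cont (fun t => f (2 * t)) (fun t => g (2 * t - 1)) (1 / 2)) a c.
Proof.
move=> [fc fi f0 f1 fI] [gc gi g0 g1 gI] meet.
rewrite /extension_cont; split.
- move=> t; case: (Rtotal_order t (1 / 2)) => [lt | [-> | gt]].
  + apply: (continuous_ext_loc _ (fun t => f (2 * t))).
      move: (open_lt _ _ lt); apply: filter_imp => u u_lt.
      by case: Rle_dec => // /Rnot_le_lt; lra.
    by apply: (continuous_comp_affine (p := 0) (q := 2)) => // u; ring.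
  + apply: extension_cont_continuous.
    * by apply: (continuous_comp_affine (p := 0) (q := 2)) => // u; ring.
    * by apply: (continuous_comp_affine (p := -1) (q := 2)) => // u; ring.
    * by rewrite (_ : 2 * (1 / 2) = 1) ?Rminus_diag ?f1 ?g0 //; field.
  + apply: (continuous_ext_loc _ (fun t => g (2 * t - 1))).
      move: (open_gt _ _ gt); apply: filter_imp => u u_gt.
      by case: Rle_dec => // ?; lra.
    by apply: (continuous_comp_affine (p := -1) (q := 2)) => // u; ring.
- rewrite /in01 => s t [s0 s1] [t0 t1].
  case: Rle_dec => hs; case: Rle_dec => ht;
    [move/fi | move/meet | move/esym/meet | move/gi];
    rewrite /in01 => st; have := st ltac:(lra) ltac:(lra); lra.
- case: Rle_dec => [_ | ]; last lra.
  by rewrite -f0; f_equal; ring.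
- case: Rle_dec => [ | _]; first lra.
  by rewrite -g1; f_equal; ring.
- rewrite /in01 => t [t0 t1]; case: Rle_dec => ht.
  + by left; apply: fI; rewrite /in01; lra.
  + by right; apply: gI; rewrite /in01; lra.
Qed.

(* The L1 distance from [p] to the curve is continuous, so it attains its
   minimum on [0, 1], which is positive. *)
Lemma curve_avoid_locally (c : R -> point) p :
  (forall t, continuous c t) -> (forall t, in01 t -> c t <> p) ->
  locally p (fun q => forall t, in01 t -> c t <> q).
Proof.
move=> cc avoid.
pose d t := Rabs (fst (c t) - fst p) + Rabs (snd (c t) - snd p).
have d_cont t : continuity_pt d t.
  apply/continuity_pt_filterlim.
  apply: (continuous_plus (fun t => Rabs (fst (c t) - fst p))
                          (fun t => Rabs (snd (c t) - snd p))).
  - apply: continuous_Rabs_comp.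
    apply: (continuous_minus (fun t => fst (c t)) (fun _ => fst p)).
    + exact: continuous_fst_comp.
    + exact: continuous_const.
  - apply: continuous_Rabs_comp.
    apply: (continuous_minus (fun t => snd (c t)) (fun _ => snd p)).
    + exact: continuous_snd_comp.
    + exact: continuous_const.
have [tm [d_min tm01]] := continuity_ab_min d 0 1 ltac:(lra) (fun t _ => d_cont t).
have d_pos : 0 < d tm.
  apply: Rnot_le_lt => d0; apply: (avoid tm tm01).
  have := Rabs_pos (fst (c tm) - fst p); have := Rabs_pos (snd (c tm) - snd p).
  rewrite /d in d0 => ? ?.
  have /Rabs_eq_0 e1 : Rabs (fst (c tm) - fst p) = 0 by lra.
  have /Rabs_eq_0 e2 : Rabs (snd (c tm) - snd p) = 0 by lra.
  by apply: injective_projections; lra.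
have half_pos : 0 < d tm / 2 by lra.
exists (mkposreal _ half_pos) => q [/= bq1 bq2] t t01 ctq.
move: bq1 bq2 (d_min t t01).
by rewrite /d ctq /ball /= /AbsRing_ball /abs /minus /plus /opp /= /Rminus; lra.
Qed.

Lemma closed_set_has_min (S : R -> Prop) lo x : S x -> (forall s, S s -> lo <= s) ->
  (forall y, ~ S y -> locally y (fun z => ~ S z)) ->
  exists m, S m /\ forall s, S s -> m <= s.
Proof.
move=> Sx lo_le S_closed.
have bounded : bound (fun y => S (- y)).
  by exists (- lo) => y /lo_le; lra.
have inhabited : exists y, S (- y) by exists (- x); rewrite Ropp_involutive.
have [m' [m'_ub m'_lub]] := completeness _ bounded inhabited.
have m_le s : S s -> - m' <= s.
  by move=> Ss; have := m'_ub (- s); rewrite Ropp_involutive => /(_ Ss); lra.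
exists (- m'); split => //; apply: NNPP => nS.
have [eps avoid] := S_closed _ nS.
have [s [Ss s_lt]] : exists s, S s /\ s < - m' + eps.
  apply: NNPP => none; have : m' <= m' - eps; last by have := cond_pos eps; lra.
  apply: m'_lub => y Sy; apply: Rnot_lt_le => y_gt; apply: none.
  by exists (- y); split => //; lra.
apply: (avoid s _ Ss); have := m_le s Ss => m_le_s.
by rewrite /ball /= /AbsRing_ball /abs /minus /plus /opp /= Rabs_right; lra.
Qed.

Lemma first_hit (al be : R -> point) :
  (forall t, continuous al t) -> (forall t, continuous be t) -> al 1 = be 0 ->
  exists s0 t0, [/\ in01 s0, in01 t0, al s0 = be t0 &
    forall s t, in01 s -> in01 t -> al s = be t -> s0 <= s].
Proof.
move=> al_cont be_cont hit1.
pose S s := 0 <= s /\ exists t, in01 t /\ al s = be t.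
have S1 : S 1 by split; [lra | exists 0; split; [rewrite /in01; lra | ]].
have S_closed y : ~ S y -> locally y (fun z => ~ S z).
  move=> nSy; case: (Rlt_le_dec y 0) => [y_lt | y_ge].
    by move: (open_lt _ _ y_lt); apply: filter_imp => z z_lt [? _]; lra.
  have avoid t : in01 t -> be t <> al y by move=> t01 e; apply: nSy; split => //; exists t.
  have : locally y (fun z => forall t, in01 t -> be t <> al z).
    exact: al_cont y _ (curve_avoid_locally be_cont avoid).
  apply: filter_imp.
  by move=> z /= not_hit [_ [t [t01 e]]]; apply: not_hit t01 (esym e).
have S_ge0 s : S s -> 0 <= s by case.
have [m [[m0 [t0 [t01 hit]]] m_min]] := closed_set_has_min S1 S_ge0 S_closed.
exists m, t0; split => //.
- by split => //; apply: m_min.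
- by move=> s t [s0 _] t01' e; apply: m_min; split => //; exists t.
Qed.

(* Follow [al] until it first meets [be], then follow [be]. *)
Lemma arc_concat I J al be a b c : simple_arc I al a b -> simple_arc J be b c -> a <> c ->
  exists ga, simple_arc (fun p => I p \/ J p) ga a c.
Proof.
move=> A B ac.
have [s0 [t0 [[s0_ge s0_le] [t0_ge t0_le] hit first]]] :=
  first_hit (arc_cont A) (arc_cont B) (etrans (arc_end A) (esym (arc_start B))).
have al0 : al 0 = a := arc_start A; have be1 : be 1 = c := arc_end B.
case: (Req_dec s0 0) => [s00 | s0_ne].
  have hit_a : be t0 = a by rewrite -hit s00.
  have t0_lt : t0 < 1.
    by case: (Rle_lt_or_eq_dec _ _ t0_le) => // t01; case: ac; rewrite -hit_a -be1 t01.
  exists (fun t => be (t0 + (1 - t0) * t)); apply: (arc_weaken (I := J)); first by right.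
  by rewrite -hit_a -be1; apply: (arc_restrict _ _ B); lra.
have A' : simple_arc I (fun t => al (0 + (s0 - 0) * t)) a (be t0).
  by rewrite -al0 -hit; apply: (arc_restrict _ _ A); lra.
case: (Req_dec t0 1) => [t01 | t0_ne].
  by eexists; rewrite -be1 -t01; apply: arc_weaken A' => p; left.
have B' : simple_arc J (fun t => be (t0 + (1 - t0) * t)) (be t0) c.
  by rewrite -be1; apply: (arc_restrict _ _ B); lra.
eexists; apply: (arc_join A' B') => s t [s_ge s_le] [t_ge t_le] e.
have s_in : in01 (0 + (s0 - 0) * s) by split; nra.
have t_in : in01 (t0 + (1 - t0) * t) by split; nra.
have s1 : s = 1 by have := first _ _ s_in t_in e; nra.
split => //; move: e; rewrite s1 (_ : 0 + (s0 - 0) * 1 = s0); last ring.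
by rewrite hit => /(arc_inj B (conj t0_ge t0_le) t_in); nra.
Qed.

(** * Paths and their drawings *)

Lemma set2_orient (T : finType) (x y u v : T) : x != y -> [set x; y] = [set u; v] ->
  (u = x /\ v = y) \/ (u = y /\ v = x).
Proof.
move=> xy E.
have /set2P [ux | uy] : u \in [set x; y] by rewrite E set21.
- subst u; have /set2P [yx | ->] : y \in [set x; v] by rewrite -E set22.
    by rewrite yx eqxx in xy.
  by left.
- subst u; have /set2P [xy' | ->] : x \in [set y; v] by rewrite -E set21.
    by rewrite xy' eqxx in xy.
  by right.
Qed.

Lemma set2_eq_of_mem (T : finType) (u v w1 w2 : T) :
  w1 \in [set u; v] -> w2 \in [set u; v] -> w1 != w2 -> [set u; v] = [set w1; w2].
Proof.
move=> h1 h2 n; apply/eqP; rewrite eq_sym eqEcard; apply/andP; split.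
  by apply/subsetP => x /set2P [-> | ->].
by rewrite !cards2 n; case: (u != v).
Qed.

Fixpoint path_edges (T : finType) (x : T) (s : seq T) : seq {set T} :=
  if s is y :: s' then [set x; y] :: path_edges y s' else [::].

Lemma size_path_edges (T : finType) (x : T) s : size (path_edges x s) = size s.
Proof. by elim: s x => [|y s IH] x //=; rewrite IH. Qed.

Lemma path_edges_sub (T : finType) (x : T) s e :
  e \in path_edges x s -> {subset e <= x :: s}.
Proof.
elim: s x => [|y s IH] x //=; rewrite inE => /orP [/eqP -> z /set2P [-> | ->] | /IH sub z /sub].
- exact: mem_head.
- by rewrite !inE eqxx orbT.
- by move=> zs; rewrite in_cons zs orbT.
Qed.

Lemma is_edge_set2 (G : sgraph) (u v : gV G) : gadj u v -> is_edge [set u; v].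
Proof. by move=> uv; apply/existsP; exists u; apply/existsP; exists v; rewrite uv eqxx. Qed.

Lemma is_edge_neq (G : sgraph) (A : {set gV G}) u v : is_edge A -> A = [set u; v] -> u != v.
Proof.
move=> /existsP [a /existsP [b /andP [ab /eqP Eab]]] E; apply: contraTneq ab => uv.
move: Eab; rewrite E -uv setUid => Eab.
have /set1P -> : a \in [set u] by rewrite Eab set21.
have /set1P -> : b \in [set u] by rewrite Eab set22.
by rewrite girr.
Qed.

Lemma path_edges_is_edge (G : sgraph) (x : gV G) s e :
  path (@gadj G) x s -> e \in path_edges x s -> is_edge e.
Proof.
elim: s x => [|y s IH] x //= /andP [xy p]; rewrite inE => /orP [/eqP -> | /(IH _ p) //].
exact: is_edge_set2.
Qed.

Lemma crossing_sym (G : sgraph) (D : drawing G) e f : crossing D e f -> crossing D f e.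
Proof.
move=> [Ee [Ef [ef [s [t [s01 [t01 st]]]]]]].
by do 3 split => //; [rewrite disjoint_sym | exists t, s].
Qed.

Definition drawn_on (G : sgraph) (D : drawing G) (es : seq {set gV G}) (q : point) :=
  exists2 e, e \in es & exists2 t, in01 t & dcurve D e t = q.

Section DrawingArcs.

Variables (G : sgraph) (D : drawing G).
Hypothesis D_drawing : is_drawing D.

Lemma vertex_drawn_on es z : {in es, forall e, is_edge e} ->
  drawn_on D es (dpos D z) -> exists2 e, e \in es & z \in e.
Proof.
move=> es_edges [e e_in [t t01 et]]; exists e => //.
have [_ [_ [_ endpoints]]] := proj1 (proj2 D_drawing) e (es_edges e e_in).
exact: endpoints et.
Qed.

Lemma edge_arc x y : gadj x y ->
  exists c, simple_arc (drawn_on D [:: [set x; y]]) c (dpos D x) (dpos D y).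
Proof.
move=> xy.
have xy_neq : x != y by apply: contraTneq xy => ->; rewrite girr.
have [cc [ci [[u [v [E [c0 c1]]]] _]]] := proj1 (proj2 D_drawing) _ (is_edge_set2 xy).
have A : simple_arc (drawn_on D [:: [set x; y]]) (dcurve D [set x; y]) (dpos D u) (dpos D v).
  by split => // t t01; exists [set x; y]; [exact: mem_head | exists t].
case: (set2_orient xy_neq E) => [[ux vy] | [uy vx]]; rewrite ?ux ?vy ?uy ?vx in A.
  by eexists; exact: A.
by eexists; exact: arc_rev A.
Qed.

(* Concatenation needs distinct endpoints, which is why the path must be simple. *)
Lemma path_arc x y p : path (@gadj G) x (rcons p y) -> uniq (x :: rcons p y) ->
  exists c, simple_arc (drawn_on D (path_edges x (rcons p y))) c (dpos D x) (dpos D y).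
Proof.
elim: p x => [|z p IH] x /=; first by move=> /andP [/edge_arc].
move=> /andP [xz p_path] /andP [x_notin p_uniq].
have [c1 A1] := edge_arc xz; have [c2 A2] := IH z p_path p_uniq.
have xy : dpos D x <> dpos D y.
  move=> /(proj1 D_drawing) eq_xy; move: x_notin.
  by rewrite eq_xy inE mem_rcons inE eqxx orbT.
have [c A] := arc_concat A1 A2 xy; exists c; apply: arc_weaken A.
move=> q [[e] | [e e_in]]; first by rewrite inE => /eqP -> ?; exists [set x; z]; rewrite ?mem_head.
by exists e => //; rewrite inE e_in orbT.
Qed.

End DrawingArcs.

Lemma card_bigcup_seq_le (T I : finType) (s : seq I) (F : I -> {set T}) k :
  (forall i, i \in s -> #|F i| <= k)%N -> (#|\bigcup_(i <- s) F i| <= size s * k)%N.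
Proof.
elim: s => [|i s IH] Fk; first by rewrite big_nil cards0.
rewrite big_cons mulSn; apply: leq_trans (leq_card_setU _ _).1 _.
by rewrite leq_add ?Fk ?mem_head // IH // => j js; rewrite Fk // inE js orbT.
Qed.

(** * Drawing a shallow topological minor *)

Lemma partial_choice (A B : Type) (P : A -> Prop) (Q : A -> B -> Prop) : B ->
  (forall a, P a -> exists b, Q a b) -> exists f, forall a, P a -> Q a (f a).
Proof.
move=> b0 ex; apply: (functional_choice (fun a b => P a -> Q a b)) => a.
by case: (classic (P a)) => [/ex [b Qb] | nP]; [exists b | exists b0].
Qed.

Section MinorDrawing.

Variables (G H : sgraph) (D : drawing G) (r : nat).
Variables (phi : gV H -> gV G) (P : {set gV H} -> seq (gV G)).
Hypothesis D_drawing : is_drawing D.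
Hypothesis phi_inj : injective phi.
Hypothesis branch_path : forall A : {set gV H}, is_edge A ->
  exists u v, A = [set u; v] /\
    path (@gadj G) (phi u) (rcons (P A) (phi v)) /\
    uniq (P A) /\ (size (P A) <= 2 * r)%N /\
    (forall x, x \in P A -> forall y, x != phi y).
Hypothesis branch_paths_disjoint : forall A A' : {set gV H},
  is_edge A -> is_edge A' -> A <> A' -> forall x, x \in P A -> x \notin P A'.

Definition route_set (A : {set gV H}) : {set gV G} := phi @: A :|: [set x in P A].

Lemma branch_vertex_notin A w : is_edge A -> phi w \notin P A.
Proof.
move=> /branch_path [u [v [_ [_ [_ [_ not_branch]]]]]].
by apply/negP => /not_branch /(_ w); rewrite eqxx.
Qed.

Lemma phi_in_route_set A w : is_edge A -> (phi w \in route_set A) = (w \in A).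
Proof.
move=> A_edge; rewrite inE (mem_imset _ _ phi_inj) inE.
by rewrite (negbTE (branch_vertex_notin w A_edge)) orbF.
Qed.

Lemma route_setI A A' z : is_edge A -> is_edge A' -> A <> A' ->
  z \in route_set A -> z \in route_set A' -> exists2 w, z = phi w & w \in A :&: A'.
Proof.
move=> A_edge A'_edge AA' zA zA'.
case/setUP: zA => [/imsetP [w wA zw] | zPA].
  by subst z; exists w => //; rewrite inE wA -(phi_in_route_set w A'_edge) zA'.
case/setUP: zA' => [/imsetP [w _ zw] | zPA'].
  by move: zPA; rewrite inE zw (negbTE (branch_vertex_notin w A_edge)).
by move: zPA zPA'; rewrite !inE => /(branch_paths_disjoint A_edge A'_edge AA') /negbTE ->.
Qed.

Definition routed (A : {set gV H}) (es : seq {set gV G}) (c : R -> point) :=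
  exists u v, [/\ A = [set u; v], path (@gadj G) (phi u) (rcons (P A) (phi v)),
    es = path_edges (phi u) (rcons (P A) (phi v)) &
    simple_arc (drawn_on D es) c (dpos D (phi u)) (dpos D (phi v))].

Lemma exists_routing : exists redges crv,
  forall A, is_edge A -> routed A (redges A) (crv A).
Proof.
suff [route routing] : exists route : {set gV H} -> seq {set gV G} * (R -> point),
    forall A, is_edge A -> routed A (route A).1 (route A).2.
  by exists (fun A => (route A).1), (fun A => (route A).2).
apply: (partial_choice (Q := fun A ec => routed A ec.1 ec.2) ([::], fun _ => (R0, R0))).
move=> A A_edge.
have [u [v [EA [p_path [p_uniq _]]]]] := branch_path A_edge.
have uv : u != v := is_edge_neq A_edge EA.
have route_uniq : uniq (phi u :: rcons (P A) (phi v)).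
  rewrite /= rcons_uniq mem_rcons inE (inj_eq phi_inj) (negbTE uv) p_uniq.
  by rewrite !(negbTE (branch_vertex_notin _ A_edge)).
have [c A_arc] := path_arc D_drawing p_path route_uniq.
by exists (path_edges (phi u) (rcons (P A) (phi v)), c), u, v.
Qed.

Lemma size_branch_path A : is_edge A -> (size (P A) <= 2 * r)%N.
Proof. by move=> /branch_path [u [v [_ [_ [_ []]]]]]. Qed.

Lemma mem_route_set A u v z : A = [set u; v] ->
  z \in phi u :: rcons (P A) (phi v) -> z \in route_set A.
Proof.
move=> EA; rewrite inE mem_rcons inE !inE EA.
by case/or3P => [/eqP -> | /eqP -> | ->]; rewrite ?imset_f ?set21 ?set22 ?orbT.
Qed.

Variables (redges : {set gV H} -> seq {set gV G}) (crv : {set gV H} -> R -> point).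
Hypothesis routing : forall A, is_edge A -> routed A (redges A) (crv A).

Lemma redges_is_edge A : is_edge A -> {in redges A, forall g, is_edge g}.
Proof. by move=> /routing [u [v [_ p_path -> _]]] g; apply: path_edges_is_edge. Qed.

Lemma redges_sub A g : is_edge A -> g \in redges A -> g \subset route_set A.
Proof.
move=> /routing [u [v [EA _ -> _]]] /path_edges_sub g_sub.
by apply/subsetP => z /g_sub; apply: mem_route_set.
Qed.

Lemma size_redges A : is_edge A -> (size (redges A) <= 2 * r + 1)%N.
Proof.
move=> A_edge; have [u [v [_ _ -> _]]] := routing A_edge.
by rewrite size_path_edges size_rcons addn1 ltnS size_branch_path.
Qed.

(* Both ends of an edge of G shared by two routes would be images of common
   ends of the two edges of H. *)
Lemma redges_neq A A' g g' : is_edge A -> is_edge A' -> A <> A' ->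
  g \in redges A -> g' \in redges A' -> g <> g'.
Proof.
move=> A_edge A'_edge AA' gA + gg'; rewrite -gg' => gA'.
have /existsP [a /existsP [b /andP [ab /eqP Eg]]] := redges_is_edge A_edge gA.
have common z : z \in g -> exists2 w, z = phi w & w \in A :&: A'.
  move=> zg; apply: (route_setI A_edge A'_edge AA').
  - exact: subsetP (redges_sub A_edge gA) z zg.
  - exact: subsetP (redges_sub A'_edge gA') z zg.
have [wa aw /setIP [waA waA']] : exists2 w, a = phi w & w \in A :&: A'.
  by apply: common; rewrite Eg set21.
have [wb bw /setIP [wbA wbA']] : exists2 w, b = phi w & w \in A :&: A'.
  by apply: common; rewrite Eg set22.
have wab : wa != wb by apply: contraTneq ab => wab; rewrite aw bw wab girr.
have [? [? [EA _]]] := branch_path A_edge; have [? [? [EA' _]]] := branch_path A'_edge.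
apply: AA'; rewrite EA EA' in waA waA' wbA wbA' *.
by rewrite (set2_eq_of_mem waA wbA wab) (set2_eq_of_mem waA' wbA' wab).
Qed.

Lemma redges_independent e f ge gf : is_edge e -> is_edge f -> [disjoint e & f] ->
  ge \in redges e -> gf \in redges f -> [disjoint ge & gf].
Proof.
move=> e_edge f_edge ef ge_in gf_in.
have [u [? [Ee _]]] := branch_path e_edge.
have e_ne_f : e <> f.
  have ue : u \in e by rewrite Ee set21.
  by move=> E; move: (disjointFr ef ue); rewrite -E ue.
apply/pred0P => z /=; apply/negP => /andP [z_ge z_gf].
have [w _ /setIP [we wf]] := route_setI e_edge f_edge e_ne_f
  (subsetP (redges_sub e_edge ge_in) z z_ge) (subsetP (redges_sub f_edge gf_in) z z_gf).
by rewrite (disjointFr ef we) in wf.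
Qed.

Lemma crv_vertex A t z : is_edge A -> in01 t -> crv A t = dpos D z -> z \in route_set A.
Proof.
move=> A_edge t01 ctz; have [? [? [_ _ _ A_arc]]] := routing A_edge.
have := arc_sub A_arc t01; rewrite ctz.
case/(vertex_drawn_on D_drawing (redges_is_edge A_edge)) => g g_in zg.
exact: subsetP (redges_sub A_edge g_in) z zg.
Qed.

(* The ends of the arc are the branch vertices, so an interior point can
   only meet a subdivision vertex. *)
Lemma crv_interior_vertex A t z : is_edge A -> in01o t -> crv A t = dpos D z -> z \in P A.
Proof.
move=> A_edge [t_gt t_lt] ctz.
have t01 : in01 t by split; apply: Rlt_le.
have [u [v [EA _ _ [_ c_inj c0 c1 _]]]] := routing A_edge.
case/setUP: (crv_vertex A_edge t01 ctz) => [/imsetP [w] | ]; last by rewrite inE.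
rewrite EA => /set2P [-> | ->] zw; exfalso; rewrite zw in ctz.
- have := c_inj t 0 t01 (conj (Rle_refl 0) Rle_0_1).
  by rewrite c0 ctz => /(_ erefl); lra.
- have := c_inj t 1 t01 (conj Rle_0_1 (Rle_refl 1)).
  by rewrite c1 ctz => /(_ erefl); lra.
Qed.

Lemma crv_interior A t : is_edge A -> in01o t ->
  (exists2 z, z \in P A & crv A t = dpos D z) \/
  exists2 g, g \in redges A & exists2 s, in01o s & dcurve D g s = crv A t.
Proof.
move=> A_edge t01.
have [? [? [_ _ _ A_arc]]] := routing A_edge.
have [g g_in [s [s_ge s_le] gs]] := arc_sub A_arc (conj (Rlt_le _ _ t01.1) (Rlt_le _ _ t01.2)).
have [_ [_ [[a [b [_ [ga gb]]]] _]]] := proj1 (proj2 D_drawing) g (redges_is_edge A_edge g_in).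
have vertex_case z : crv A t = dpos D z -> (exists2 z, z \in P A & crv A t = dpos D z).
  by move=> ctz; exists z => //; apply: crv_interior_vertex ctz.
case: (Rle_lt_or_eq_dec _ _ s_ge) => [s_gt | s0].
  case: (Rle_lt_or_eq_dec _ _ s_le) => [s_lt | s1].
    by right; exists g => //; exists s.
  by left; apply: (vertex_case b); rewrite -gs s1.
by left; apply: (vertex_case a); rewrite -gs -s0.
Qed.

(* Subdivision vertices are not shared, so a common interior point of two
   routes is interior to an edge of G. *)
Lemma crv_meet A A' t t' : is_edge A -> is_edge A' -> A <> A' -> in01o t -> in01o t' ->
  crv A t = crv A' t' -> exists2 g, g \in redges A & exists2 s, in01o s & dcurve D g s = crv A t.
Proof.
move=> A_edge A'_edge AA' t01 t'01 meet.
case: (crv_interior A_edge t01) => // [[z zA ctz]].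
have := crv_interior_vertex A'_edge t'01 (etrans (esym meet) ctz).
by rewrite (negbTE (branch_paths_disjoint A_edge A'_edge AA' zA)).
Qed.

Definition minor_drawing : drawing H := Drawing (fun x => dpos D (phi x)) crv.

Lemma minor_drawing_is_drawing : is_drawing minor_drawing.
Proof.
split; [| split].
- by move=> x y /(proj1 D_drawing) /phi_inj.
- move=> A A_edge; have [u [v [EA _ _ [c_cont c_inj c0 c1 _]]]] := routing A_edge.
  do 3 (split => //); first by exists u, v.
  by move=> t x t01 /(crv_vertex A_edge t01); rewrite phi_in_route_set.
move=> A1 A2 A3 p A1_edge A2_edge A3_edge n12 n13 n23.
move=> [t1 [t1o c1p]] [t2 [t2o c2p]] [t3 [t3o c3p]].
have [g1 g1_in [s1 s1o g1p]] :=
  crv_meet A1_edge A2_edge n12 t1o t2o (etrans c1p (esym c2p)).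
have [g2 g2_in [s2 s2o g2p]] :=
  crv_meet A2_edge A1_edge (nesym n12) t2o t1o (etrans c2p (esym c1p)).
have [g3 g3_in [s3 s3o g3p]] :=
  crv_meet A3_edge A1_edge (nesym n13) t3o t1o (etrans c3p (esym c1p)).
apply: (proj2 (proj2 D_drawing) g1 g2 g3 p).
- exact: (redges_is_edge A1_edge g1_in).
- exact: (redges_is_edge A2_edge g2_in).
- exact: (redges_is_edge A3_edge g3_in).
- exact: (redges_neq A1_edge A2_edge n12 g1_in g2_in).
- exact: (redges_neq A1_edge A3_edge n13 g1_in g3_in).
- exact: (redges_neq A2_edge A3_edge n23 g2_in g3_in).
- by exists s1; rewrite g1p.
- by exists s2; rewrite g2p.
- by exists s3; rewrite g3p.
Qed.

Lemma lift_crossing e f : crossing minor_drawing e f ->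
  exists ge gf, [/\ ge \in redges e, gf \in redges f & crossing D ge gf].
Proof.
move=> [e_edge [f_edge [ef [s [t [s01 [t01 st]]]]]]].
have [? [? [_ _ _ e_arc]]] := routing e_edge.
have [? [? [_ _ _ f_arc]]] := routing f_edge.
have [ge ge_in [s' s'01 ge_s']] := arc_sub e_arc s01.
have [gf gf_in [t' t'01 gf_t']] := arc_sub f_arc t01.
exists ge, gf; split => //; split; first exact: (redges_is_edge e_edge ge_in).
split; first exact: (redges_is_edge f_edge gf_in).
split; first exact: redges_independent e_edge f_edge ef ge_in gf_in.
by exists s', t'; rewrite ge_s' gf_t'.
Qed.

Definition lifted_bearing (BG : {set gV G} -> {set gV G} -> Prop) (e f : {set gV H}) :=
  crossing minor_drawing e f /\
  exists ge gf, [/\ ge \in redges e, gf \in redges f & BG ge gf].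

Lemma bearing_lifted_bearing BG : bearing D BG -> bearing minor_drawing (lifted_bearing BG).
Proof.
move=> [_ BG_total]; split => [e f [] // | e f ef].
have [ge [gf [ge_in gf_in ge_gf]]] := lift_crossing ef.
case: (BG_total _ _ ge_gf) => [BGef | BGfe]; [left | right]; split.
- exact: ef.
- by exists ge, gf.
- exact: crossing_sym.
- by exists gf, ge.
Qed.

(* Branch vertices go to their preimage, subdivision vertices to an end of
   the unique edge of H that they subdivide. *)
Lemma exists_route_retraction (w0 : gV H) : exists psi : gV G -> gV H,
  forall A x, is_edge A -> x \in route_set A -> psi x \in A.
Proof.
have retract x : (exists A, is_edge A /\ x \in route_set A) ->
    exists w, forall A, is_edge A -> x \in route_set A -> w \in A.
  move=> [A [A_edge xA]].
  case: (classic (exists w, x = phi w)) => [[w ->] | not_branch].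
    by exists w => A' A'_edge; rewrite phi_in_route_set.
  have [u [? [EA _]]] := branch_path A_edge.
  exists u => A' A'_edge xA'; case: (classic (A' = A)) => [-> | A'A]; first by rewrite EA set21.
  by have [w xw _] := route_setI A'_edge A_edge A'A xA' xA; case: not_branch; exists w.
have [psi psiP] := partial_choice w0 retract.
by exists psi => A x A_edge xA; apply: (psiP x _ A A_edge xA); exists A.
Qed.

Lemma minor_drawing_gap_cover k :
  gap_cover_drawing k D -> gap_cover_drawing ((2 * r + 1) * k) minor_drawing.
Proof.
move=> [BG [BG_bearing BG_cover]].
have [CG CG_cover] := partial_choice
  (Q := fun g C : {set gV G} => (#|C| <= k)%N /\ [disjoint C & g] /\
                   forall f, BG g f -> exists x, x \in f /\ x \in C) set0 BG_cover.
exists (lifted_bearing BG); split; first exact: bearing_lifted_bearing.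
move=> e e_edge.
have [u _] := branch_path e_edge; have [psi psiP] := exists_route_retraction u.
exists ((psi @: \bigcup_(g <- redges e) CG g) :\: e); split; [| split].
- apply: leq_trans (subset_leq_card (subsetDl _ _)) _.
  apply: leq_trans (leq_imset_card _ _) _.
  apply: leq_trans (card_bigcup_seq_le (k := k) _) _.
    by move=> g /(redges_is_edge e_edge) /CG_cover [].
  by rewrite leq_mul2r size_redges ?orbT.
- by rewrite disjoints_subset subsetDr.
move=> f [[_ [f_edge [ef _]]] [ge [gf [ge_in gf_in BGgf]]]].
have [_ [_ CG_covers]] := CG_cover ge (redges_is_edge e_edge ge_in).
have [x [xf xC]] := CG_covers gf BGgf.
have psi_f : psi x \in f.
  by apply: (psiP f x f_edge); apply: subsetP (redges_sub f_edge gf_in) x xf.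
exists (psi x); split => //; rewrite inE (disjointFl ef psi_f) imset_f //.
by rewrite bigcup_seq; apply: subsetP (bigcup_sup ge ge_in) x xC.
Qed.

End MinorDrawing.

Theorem corollary11 (k r : nat) (G H : sgraph) :
  gap_cover_planar k G -> shallow_top_minor r H G ->
  gap_cover_planar ((2 * r + 1) * k) H.
Proof.
move=> [D [D_drawing D_gap]] [phi [P [phi_inj [branch_path disjoint_paths]]]].
have [redges [crv routing]] := exists_routing D_drawing phi_inj branch_path.
exists (minor_drawing D phi crv); split.
- exact: (minor_drawing_is_drawing D_drawing phi_inj branch_path disjoint_paths routing).
- exact: (minor_drawing_gap_cover phi_inj branch_path disjoint_paths routing D_gap).
Qed.
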